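(* Let $\Delta=\prod_{1\le i<j\le n}(x_i-x_j)$ and for $n-1\ge m_1>\dots>m_k\ge1$ let $\omega_{m_1,\dots,m_k}=d_{m_1}\cdots d_{m_k}\Delta$. Then the set \[ \{\omega_{m_1,\dots,m_k}\mid n-1\ge m_1>\dots>m_k\ge1,\ k=1,\dots,n-1\}\cup\{\Delta\} \] is linearly independent in $\mathbb{R}[x_1,\dots,x_n]\otimes\wedge\mathbb{R}^n$.
   Context: With $\partial_i=\partial/\partial x_i$, $d_j(h\,dx_{i_1}\wedge\cdots\wedge dx_{i_k})=\sum_{l=1}^n(\partial_l^jh)\,dx_l\wedge dx_{i_1}\wedge\cdots\wedge dx_{i_k}$, extended linearly. *)

From HB Require Import structures.
From mathcomp Require Import all_boot all_order all_algebra.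
From mathcomp Require Import reals.
From mathcomp Require Import mpoly.
Set Implicit Arguments. Unset Strict Implicit. Unset Printing Implicit Defensive.
Import Order.TTheory GRing.Theory Num.Theory.
Local Open Scope ring_scope.

(* Elements of R[x_1..x_n] (x) /\ R^n: the coefficient of the basis element
   dx_I := dx_{i_1} /\ ... /\ dx_{i_k} (i_1 < ... < i_k, I = {i_1,..,i_k}). *)
Definition form (R : realType) (n : nat) := {ffun {set 'I_n} -> {mpoly R[n]}}.

(* dx_l /\ dx_I = (-1)^#{i in I | i < l} dx_(l |: I) when l \notin I, else 0 *)
Definition wsign (R : realType) (n : nat) (l : 'I_n) (I : {set 'I_n}) : R :=
  (-1) ^+ #|[set i in I | (i < l)%N]|.

(* d_j (h dx_I) = sum_l (partial_l^j h) dx_l /\ dx_I, extended linearly *)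
Definition dj (R : realType) (n : nat) (j : nat) (w : form R n) : form R n :=
  [ffun J : {set 'I_n} =>
     \sum_(I : {set 'I_n}) \sum_(l : 'I_n | (l \notin I) && (l |: I == J))
        wsign R l I *: iter j (mderiv l) (w I)].

Definition Delta_poly (R : realType) (n : nat) : {mpoly R[n]} :=
  \prod_(i < n) \prod_(j < n | (i < j)%N) ('X_i - 'X_j).

Definition Delta (R : realType) (n : nat) : form R n :=
  [ffun I : {set 'I_n} => if I == set0 then Delta_poly R n else 0].

Definition omega (R : realType) (n : nat) (s : seq nat) : form R n :=
  foldr (fun m w => dj m w) (Delta R n) s.

Definition admissible (n : nat) (s : seq nat) : bool :=
  sorted (fun a b => b < a)%N s && all (fun m => (1 <= m <= n.-1)%N) s.

(* Delta is, up to sign, a Vandermonde determinant, so its coefficient at x^e is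
   nonzero exactly when e is a permutation of (0, ..., n-1), and it changes sign
   when two exponents are swapped.  For g vanishing on J, the coefficient of
   omega_s at x^g dx_J is a positive integer times the coefficient of Delta at
   the exponent that carries m_1, ..., m_k on the elements of J in increasing
   order and agrees with g elsewhere: each d_m puts the exponent m on a new
   variable x_l, and the sign of dx_l /\ dx_(J \ l) is exactly the sign of moving
   that exponent into place.  For J = {1, ..., k} and g listing the exponents in
   [0, n) missing from s, this coefficient is nonzero for omega_s and vanishes
   for every other admissible index sequence. *)

From Pilot Require Import Defs.
From mathcomp Require Import all_boot all_algebra fingroup perm.
From mathcomp Require Import reals mpoly.
Import GRing.Theory Num.Theory.
Set Implicit Arguments. Unset Strict Implicit. Unset Printing Implicit Defensive.
Local Open Scope ring_scope.

Section PermExponent.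
Variable n : nat.

Definition perm_mnm (s : 'S_n) : 'X_{1..n} := [multinom val ((s^-1)%g i) | i < n].

Definition mnm_perm (t : 'S_n) (e : 'X_{1..n}) : 'X_{1..n} := [multinom e (t i) | i < n].

Lemma perm_mnm_inj : injective perm_mnm.
Proof.
move=> s t /mnmP st; apply: invg_inj; apply/permP => j; apply: val_inj.
by have := st j; rewrite !mnmE.
Qed.

Lemma perm_iota_perm_mnm (u : seq nat) (s : 'S_n) : size u = n ->
  perm_mnm s = [multinom nth 0%N u i | i < n] -> perm_eq u (iota 0 n).
Proof.
move=> szu us; have -> : u = map val (map (s^-1)%g (enum 'I_n)).
  apply: (@eq_from_nth _ 0%N); first by rewrite 2!size_map size_enum_ord.
  move=> i lt_in; rewrite szu in lt_in.
  rewrite -map_comp (nth_map (Ordinal lt_in)) ?size_enum_ord //.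
  have := congr1 (fun m : 'X_{1..n} => m (Ordinal lt_in)) us.
  rewrite /= !mnmE => <-; rewrite (_ : nth _ _ _ = Ordinal lt_in) //.
  by apply: val_inj; exact: nth_enum_ord.
rewrite -val_enum_ord perm_map // uniq_perm ?enum_uniq //.
  by rewrite (map_inj_uniq (@perm_inj _ _)) enum_uniq.
by move=> i; rewrite mem_enum; apply/mapP; exists (s i); rewrite ?mem_enum ?permK.
Qed.

Lemma perm_mnm_perm_iota (u : seq nat) : size u = n -> perm_eq u (iota 0 n) ->
  exists s, perm_mnm s = [multinom nth 0%N u i | i < n].
Proof.
move=> szu pu; have uu : uniq u by rewrite (perm_uniq pu) iota_uniq.
have ltu (i : 'I_n) : (nth 0%N u i < n)%N.
  by have := mem_nth 0%N (_ : (i < size u)%N); rewrite (perm_mem pu) mem_iota szu; apply.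
have f_inj : injective (fun i => Ordinal (ltu i)).
  move=> i j /(congr1 val) /= /eqP; rewrite nth_uniq ?szu // => /eqP; exact: val_inj.
by exists (perm f_inj)^-1%g; apply/mnmP => i; rewrite !mnmE invgK permE.
Qed.

End PermExponent.

Section Vandermonde.
Variables (R : realType) (n : nat).

Definition Delta_coef (e : 'X_{1..n}) : R := (Delta_poly R n)@_e.

Let Delta_sign : R := \prod_(i < n) (-1) ^+ i.

(* [Delta_poly] is the Vandermonde determinant of [-x_1, ..., -x_n]. *)
Lemma Delta_polyE :
  Delta_poly R n = \sum_(s : 'S_n) ((-1) ^+ s * Delta_sign) *: 'X_[perm_mnm s].
Proof.
pose a : 'rV[{mpoly R[n]}]_n := \row_j (- 'X_j).
have -> : Delta_poly R n = \det (Vandermonde n a).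
  rewrite det_Vandermonde /Delta_poly; apply: eq_bigr => i _.
  by apply: eq_bigr => j _; rewrite !mxE opprK addrC.
rewrite /determinant; apply: eq_bigr => s _.
rewrite -mul_mpolyC rmorphM /= rmorph_sign rmorph_prod /= -mulrA; congr (_ * _).
rewrite (@mpolyXE _ _ s) -big_split /=; apply: eq_bigr => i _.
by rewrite !mxE exprNn expr1n mulr1 rmorph_sign mnmE permK [LHS]exprNn.
Qed.

Lemma Delta_coefE (e : 'X_{1..n}) :
  Delta_coef e = \sum_(s : 'S_n) (-1) ^+ s * Delta_sign * (perm_mnm s == e)%:R.
Proof.
rewrite /Delta_coef Delta_polyE raddf_sum; apply: eq_bigr => s _.
by apply: (etrans (mcoeffZ _ _ _)); rewrite mcoeffX.
Qed.

Lemma Delta_coef_perm_mnm (t : 'S_n) : Delta_coef (perm_mnm t) != 0.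
Proof.
rewrite Delta_coefE (bigD1 t) //= eqxx mulr1 big1 ?addr0.
  by rewrite mulf_neq0 ?signr_eq0 //; apply/prodf_neq0 => i _; rewrite signr_eq0.
by move=> s st; rewrite (inj_eq (@perm_mnm_inj n)) (negbTE st) mulr0.
Qed.

Lemma Delta_coef_eq0 (e : 'X_{1..n}) :
  (forall s, perm_mnm s != e) -> Delta_coef e = 0.
Proof. by move=> ne; rewrite Delta_coefE big1 // => s _; rewrite (negbTE (ne s)) mulr0. Qed.

Lemma Delta_coef_tperm (a b : 'I_n) (e : 'X_{1..n}) :
  a != b -> Delta_coef (mnm_perm (tperm a b) e) = - Delta_coef e.
Proof.
move=> ab; rewrite !Delta_coefE (reindex_inj (mulIg (tperm a b))) /= -sumrN.
apply: eq_bigr => s _.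
rewrite odd_permM odd_tperm ab signr_addb /= expr1 mulrN1 !mulNr.
congr (- (_ * _%:R)); congr (nat_of_bool _).
apply/eqP/eqP => [ts|<-]; apply/mnmP => i; rewrite !mnmE ?invMg ?tpermV ?permM //.
by have := congr1 (fun m : 'X_{1..n} => m (tperm a b i)) ts;
  rewrite /= !mnmE invMg tpermV permM tpermK.
Qed.

Lemma Delta_coef_nth_neq0 (u : seq nat) : size u = n ->
  (Delta_coef [multinom nth 0%N u i | i < n] != 0) = perm_eq u (iota 0 n).
Proof.
move=> szu; apply/idP/idP => [|/(perm_mnm_perm_iota szu) [s <-]].
  case: (pickP (fun s => perm_mnm s == [multinom nth 0%N u i | i < n]));
    last by move=> none; rewrite Delta_coef_eq0 ?eqxx // => s; rewrite none.
  by move=> s /eqP us _; exact: perm_iota_perm_mnm us.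
exact: Delta_coef_perm_mnm.
Qed.

End Vandermonde.

Section Rank.
Variable n : nat.
Implicit Types (J : {set 'I_n}) (i j x : 'I_n).

Definition rank_in J i : nat := #|[set j in J | (j < i)%N]|.

Lemma rank_in_lt J i j : i \in J -> (i < j)%N -> (rank_in J i < rank_in J j)%N.
Proof.
move=> iJ ij; apply: proper_card; apply/properP; split.
  by apply/subsetP => k; rewrite !inE => /andP [-> /ltn_trans ->].
by exists i; rewrite !inE ?iJ ?ij // ltnn.
Qed.

Lemma rank_in_inj J : {in J &, injective (rank_in J)}.
Proof.
move=> i j iJ jJ rij; apply: val_inj; case: (ltngtP i j) => // [ij|ji].
  by have := rank_in_lt iJ ij; rewrite rij ltnn.
by have := rank_in_lt jJ ji; rewrite rij ltnn.
Qed.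

Lemma rank_inD1 J x i : x \in J -> rank_in J i = ((x < i)%N + rank_in (J :\ x) i)%N.
Proof.
move=> xJ; rewrite /rank_in (cardsD1 x) inE xJ /=; congr (_ + _)%N.
by apply: eq_card => j; rewrite !inE andbA.
Qed.

Lemma rank_in_predecessor J x r : x \in J -> rank_in J x = r.+1 ->
  exists2 y, y \in J & (y < x)%N /\ rank_in J y = r.
Proof.
move=> xJ rx; set B := [set j in J | (j < x)%N].
have [j0 j0B] : exists j0, j0 \in B.
  by apply/set0Pn/eqP => B0; move: rx; rewrite /rank_in -/B B0 cards0.
case: (arg_maxnP val j0B) => y yB' ymax.
have yB : y \in B := yB'.
move: (yB); rewrite inE => /andP [yJ yx].
exists y => //; split => //.
apply/eqP; rewrite -eqSS -rx /rank_in -/B (cardsD1 y B) yB add1n eqSS; apply/eqP.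
apply: eq_card => j; rewrite !inE; case: (eqVneq j y) => [->|jy] /=.
  by rewrite ltnn andbF.
apply/andP/andP => [[jJ /ltn_trans->]|[jJ jx]] //; split => //.
have jB : j \in B by rewrite inE jJ jx.
have jy' : (j <= y)%N := ymax j jB.
by rewrite ltn_neqAle jy' andbT; apply: contra jy => /eqP/val_inj ->.
Qed.

End Rank.

Section Placement.
Variables (R : realType) (n : nat).
Implicit Types (J : {set 'I_n}) (g : 'X_{1..n}) (x y : 'I_n) (s : seq nat).

Definition place J (v : nat -> nat) g : 'X_{1..n} :=
  [multinom if i \in J then v (rank_in J i) else g i | i < n].

Definition mnm_set g x (m : nat) : 'X_{1..n} :=
  [multinom if i == x then m else g i | i < n].

Definition insert_nth s (m p : nat) (q : nat) : nat :=
  if (q < p)%N then nth 0%N s q else if q == p then m else nth 0%N s q.-1.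

Lemma place_insert_nthS J s m r g x y : x \in J -> y \in J ->
  rank_in J y = r -> rank_in J x = r.+1 ->
  place J (insert_nth s m r.+1) g = mnm_perm (tperm y x) (place J (insert_nth s m r) g).
Proof.
move=> xJ yJ ry rx; apply/mnmP => i; rewrite !mnmE /insert_nth.
case: (tpermP y x i) => [->|->|yi xi].
- by rewrite yJ xJ ry rx ltnSn ltnNge leqnSn /= eqn_leq ltnn.
- by rewrite xJ yJ rx ry !ltnn !eqxx.
case: ifP => // iJ.
have ir : rank_in J i != r by rewrite -ry; apply/eqP => /(rank_in_inj iJ yJ).
have irS : rank_in J i != r.+1 by rewrite -rx; apply/eqP => /(rank_in_inj iJ xJ).
rewrite (negbTE ir) (negbTE irS) ltnS leq_eqVlt (negbTE ir) /=.
by case: ltngtP ir irS => // ->.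
Qed.

Lemma Delta_coef_place_insert_nth J s m g x r : x \in J -> rank_in J x = r ->
  Delta_coef R (place J (insert_nth s m r) g) =
  (-1) ^+ r * Delta_coef R (place J (insert_nth s m 0) g).
Proof.
elim: r x => [|r IHr] x xJ rx; first by rewrite mul1r.
have [y yJ [yx ry]] := rank_in_predecessor xJ rx.
rewrite (place_insert_nthS _ _ _ xJ yJ ry rx) Delta_coef_tperm ?(IHr y) //.
  by rewrite exprS mulN1r mulNr.
by rewrite neq_ltn yx.
Qed.

Lemma place_insert_nth0 J s m g :
  place J (insert_nth s m 0) g = place J (nth 0%N (m :: s)) g.
Proof. by apply/mnmP => i; rewrite !mnmE /insert_nth; case: (rank_in J i). Qed.

Lemma place_setD1 J s m g x : x \in J ->
  place (J :\ x) (nth 0%N s) (mnm_set g x m) = place J (insert_nth s m (rank_in J x)) g.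
Proof.
move=> xJ; apply/mnmP => i; rewrite !mnmE !inE /insert_nth.
case: (eqVneq i x) => [->|ix] /=; first by rewrite xJ ltnn eqxx.
case: ifP => // iJ.
case: (ltngtP i x) => [lt_ix|lt_xi|/val_inj/eqP]; last by rewrite (negbTE ix).
- have -> : rank_in (J :\ x) i = rank_in J i.
    by rewrite (rank_inD1 i xJ) ltnNge (ltnW lt_ix).
  by rewrite rank_in_lt.
- have rankS : rank_in J i = (rank_in (J :\ x) i).+1 by rewrite (rank_inD1 i xJ) lt_xi.
  have := rank_in_lt xJ lt_xi; rewrite rankS => lt_rank.
  by rewrite ltnNge (ltnW lt_rank) /= (gtn_eqF lt_rank).
Qed.

Lemma Delta_coef_place_setD1 J s m g x : x \in J ->
  Delta_coef R (place (J :\ x) (nth 0%N s) (mnm_set g x m)) =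
  (-1) ^+ rank_in J x * Delta_coef R (place J (nth 0%N (m :: s)) g).
Proof.
move=> xJ.
by rewrite place_setD1 // (Delta_coef_place_insert_nth _ _ _ xJ) // place_insert_nth0.
Qed.

End Placement.

Section Omega.
Variables (R : realType) (n : nat).
Implicit Types (J : {set 'I_n}) (g : 'X_{1..n}) (s : seq nat).

Lemma mcoeff_iter_mderiv (x : 'I_n) (m : nat) (p : {mpoly R[n]}) g : g x = 0%N ->
  (iter m (mderiv x) p)@_g = p@_(mnm_set g x m) *+ m`!.
Proof.
move=> gx; rewrite -mderivn_iter mcoeff_mderivm; congr (_@__ *+ _).
  apply/mnmP => i; rewrite mnmDE mulmnE mnm1E !mnmE.
  by case: (eqVneq i x) => [->|ix]; rewrite ?eqxx ?mul1n ?gx ?addn0 // eq_sym (negbTE ix).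
rewrite (bigD1 x) //= big1 ?muln1.
  by rewrite mnmDE !mulmnE mnm1E eqxx gx addn0 mul1n ffactnn.
by move=> i ix; rewrite mulmnE mnm1E eq_sym (negbTE ix) mul0n ffactn0.
Qed.

Lemma mcoeff_formZ (a : R) (w : Defs.form R n) J g :
  ((a *: w) J)@_g = a * (w J)@_g.
Proof. by rewrite ffunE; apply: (etrans (mcoeffZ _ _ _)). Qed.

Lemma djE (m : nat) (w : Defs.form R n) J :
  dj m w J = \sum_(l in J) wsign R l (J :\ l) *: iter m (mderiv l) (w (J :\ l)).
Proof.
rewrite /dj ffunE (eq_bigr _ (fun I _ => big_mkcond _ _)) /= exchange_big /=.
rewrite [RHS]big_mkcond; apply: eq_bigr => l _.
case: (boolP (l \in J)) => lJ.
  rewrite (bigD1 (J :\ l)) //= !inE eqxx /= setD1K // eqxx /= big1 ?addr0 //.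
  move=> I IJ; case: ifP => // /andP [lI /eqP e]; move: IJ.
  by rewrite -e setU1K ?eqxx.
rewrite big1 // => I _; case: ifP => // /andP [_ /eqP e].
by move: lJ; rewrite -e setU11.
Qed.

Definition omega_scale s : nat := ((size s)`! * \prod_(m <- s) m`!)%N.

Lemma omega_scale_cons m s :
  omega_scale (m :: s) = ((size s).+1 * m`! * omega_scale s)%N.
Proof.
by rewrite /omega_scale big_cons /= factS -!mulnA; congr (_ * _)%N; rewrite mulnCA.
Qed.

Lemma omega_scale_gt0 s : (0 < omega_scale s)%N.
Proof. by rewrite muln_gt0 fact_gt0 prodn_gt0 // => m; rewrite fact_gt0. Qed.

Lemma mcoeff_omega s J g : {in J, forall i, g i = 0%N} ->
  (omega R n s J)@_g =
  if #|J| == size s then (omega_scale s)%:R * Delta_coef R (place J (nth 0%N s) g) else 0.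
Proof.
elim: s J g => [|m s IHs] J g gJ.
  rewrite /omega /Delta ffunE cards_eq0; case: eqP => [->|_]; last by rewrite mcoeff0.
  rewrite /omega_scale big_nil mul1r /Delta_coef; congr (_@__).
  by apply/mnmP => i; rewrite mnmE inE.
have cardJ l : l \in J -> #|J| = #|J :\ l|.+1 by move=> lJ; rewrite (cardsD1 l J) lJ.
have term l : l \in J ->
    (wsign R l (J :\ l) *: iter m (mderiv l) (omega R n s (J :\ l)))@_g =
    if #|J| == (size s).+1 then
      (omega_scale s)%:R * Delta_coef R (place J (nth 0%N (m :: s)) g) *+ m`!
    else 0.
  move=> lJ; apply: (etrans (mcoeffZ _ _ _)).
  rewrite mcoeff_iter_mderiv ?gJ // IHs; last first.
    by move=> i; rewrite !inE mnmE => /andP [/negbTE -> iJ]; exact: gJ.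
  rewrite (cardJ l lJ) eqSS; case: ifP => _; last by rewrite mul0rn mulr0.
  rewrite Delta_coef_place_setD1 // /wsign (rank_inD1 l lJ) ltnn add0n.
  by rewrite -/(rank_in (J :\ l) l) mulrnAr mulrCA signrMK.
rewrite /omega /= -/(omega R n s) djE raddf_sum /= (eq_bigr _ term) sumr_const.
case: ifP => /eqP cardJs; last by rewrite mul0rn.
rewrite omega_scale_cons cardJs -mulrnA -mulrnAl -mulr_natr -natrM.
by rewrite mulnC [(m`! * _)%N]mulnC.
Qed.

End Omega.

Section ComplementExponent.
Variable n : nat.
Implicit Types s t : seq nat.

Lemma card_ord_lt k : (k <= n)%N -> #|[set j : 'I_n | (j < k)%N]| = k.
Proof.
move=> le_kn; rewrite -sum1_card (eq_bigl (fun j : 'I_n => j < k)%N) => [|j].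
  by rewrite (big_ord_narrow le_kn) sum1_card card_ord.
by rewrite inE.
Qed.

Lemma rank_in_ord_lt k (i : 'I_n) : (i < k)%N -> rank_in [set j : 'I_n | (j < k)%N] i = i.
Proof.
move=> ik; rewrite /rank_in -[RHS](card_ord_lt (ltnW (ltn_ord i))).
apply: eq_card => j; rewrite !inE; apply/andP/idP => [[] //|ji]; split=> //.
exact: ltn_trans ji ik.
Qed.

Definition compl_seq s := [seq v <- iota 0 n | v \notin s].

Definition compl_mnm s : 'X_{1..n} :=
  [multinom if (i < size s)%N then 0%N else nth 0%N (compl_seq s) (i - size s) | i < n].

Lemma place_compl_mnm s t : size t = size s ->
  place [set j : 'I_n | (j < size s)%N] (nth 0%N t) (compl_mnm s) =
  [multinom nth 0%N (t ++ compl_seq s) i | i < n].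
Proof.
move=> st; apply/mnmP => i; rewrite !mnmE inE nth_cat st.
by case: ifP => [/rank_in_ord_lt ->|->].
Qed.

Let gtn_trans : transitive (fun a b : nat => b < a)%N.
Proof. by move=> a b c ba cb; exact: ltn_trans cb ba. Qed.

Let gtn_irr : irreflexive (fun a b : nat => b < a)%N.
Proof. exact: ltnn. Qed.

Lemma admissible_uniq s : admissible n s -> uniq s.
Proof. by case/andP => /(sorted_uniq gtn_trans gtn_irr). Qed.

Lemma admissible_ltn s : admissible n s -> {in s, forall v, v < n}%N.
Proof.
case/andP => _ /allP s_bnd v /s_bnd /andP [v_gt0 v_le].
rewrite (leq_ltn_trans v_le) // ltn_predL.
exact: leq_trans v_gt0 (leq_trans v_le (leq_pred n)).
Qed.

Lemma perm_admissible_compl s : admissible n s -> perm_eq (s ++ compl_seq s) (iota 0 n).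
Proof.
move=> ads; apply: perm_trans (permEl (perm_filterC (mem s) (iota 0 n))).
rewrite perm_cat2r uniq_perm ?(admissible_uniq ads) ?filter_uniq ?iota_uniq // => v.
rewrite mem_filter /=; apply/idP/andP => [vs|[] //]; split=> //.
by rewrite mem_iota add0n (admissible_ltn ads).
Qed.

Lemma size_admissible s : admissible n s -> (size s + size (compl_seq s))%N = n.
Proof. by move/perm_admissible_compl/perm_size; rewrite size_cat size_iota. Qed.

Lemma Delta_coef_compl_neq0 (R : realType) s t : admissible n s -> admissible n t ->
  size t = size s ->
  (Delta_coef R [multinom nth 0%N (t ++ compl_seq s) i | i < n] != 0) = (t == s).
Proof.
move=> ads adt st.
rewrite Delta_coef_nth_neq0; last by rewrite size_cat st size_admissible.
apply/idP/eqP => [ptC|->]; last exact: perm_admissible_compl.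
have /perm_mem pts : perm_eq t s.
  by rewrite -(perm_cat2r (compl_seq s)) (perm_trans ptC) // perm_sym perm_admissible_compl.
exact: irr_sorted_eq gtn_trans gtn_irr _ _ (proj1 (andP adt)) (proj1 (andP ads)) pts.
Qed.

Lemma mcoeff_omega_compl (R : realType) s t : admissible n s -> admissible n t ->
  (omega R n t [set j : 'I_n | (j < size s)%N])@_(compl_mnm s) =
  if t == s then
    (omega_scale s)%:R * Delta_coef R [multinom nth 0%N (s ++ compl_seq s) i | i < n]
  else 0.
Proof.
move=> ads adt; rewrite mcoeff_omega => [|i]; last by rewrite inE mnmE => ->.
have cardJ : #|[set j : 'I_n | (j < size s)%N]| = size s.
  by rewrite card_ord_lt // -(size_admissible ads) leq_addr.
rewrite cardJ; case: eqP => [st|]; last by case: eqP => // ->.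
rewrite place_compl_mnm //; case: (eqVneq t s) => [-> //|ts].
have := Delta_coef_compl_neq0 R ads adt (esym st).
by rewrite (negbTE ts) => /negbFE/eqP ->; rewrite mulr0.
Qed.

End ComplementExponent.

Theorem lemma12 (R : realType) (n : nat) (L : seq (seq nat)) (c : seq nat -> R) :
  uniq L -> all (admissible n) L ->
  \sum_(s <- L) c s *: omega R n s = 0 ->
  forall s, s \in L -> c s = 0.
Proof.
move=> uL adL sum0 s sL; have ads := allP adL s sL.
have Ds_neq0 : Delta_coef R [multinom nth 0%N (s ++ compl_seq n s) i | i < n] != 0.
  by rewrite Delta_coef_compl_neq0.
set J := [set j : 'I_n | (j < size s)%N].
have := congr1 (fun w : Defs.form R n => (w J)@_(compl_mnm n s)) sum0.
rewrite /= sum_ffunE raddf_sum ffunE mcoeff0 (bigD1_seq s) //=.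
rewrite big1_seq => [|t /andP [ts tL]].
  rewrite addr0 mcoeff_formZ mcoeff_omega_compl // eqxx => /eqP.
  by rewrite !mulf_eq0 pnatr_eq0 eqn0Ngt omega_scale_gt0 (negbTE Ds_neq0) /= orbF => /eqP.
by rewrite mcoeff_formZ mcoeff_omega_compl ?(allP adL) // (negbTE ts) mulr0.
Qed.
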